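(* Let $\mathcal{H}\in\mathbb{R}_D^{[n_1,\ldots,n_m]}$. Then $\mathcal{H}$ is $\mathbb{R}$-separable if and only if $\mathcal{H}$ is $\mathbb{C}$-separable.
   Context: For vectors $v_i$, $[v_1,\ldots,v_m]_{\otimes h}:=v_1\otimes\cdots\otimes v_m\otimes\overline{v_1}\otimes\cdots\otimes\overline{v_m}$. $\mathbb{R}_D^{[n_1,\ldots,n_m]}$ is the set of real tensors of the form $\sum_i\lambda_i[u_i^1,\ldots,u_i^m]_{\otimes h}$ with $\lambda_i\in\mathbb{R}$ and $u_i^j\in\mathbb{R}^{n_j}$. A Hermitian tensor $\mathcal{H}$ is $\mathbb{C}$-separable if $\mathcal{H}=\sum_{i=1}^r[u_i^1,\ldots,u_i^m]_{\otimes h}$ for some $u_i^j\in\mathbb{C}^{n_j}$, and $\mathbb{R}$-separable if this holds with all $u_i^j\in\mathbb{R}^{n_j}$. *)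

From HB Require Import structures.
From mathcomp Require Import all_boot all_order all_algebra.
From mathcomp Require Import reals.
From mathcomp Require Import complex.
Set Implicit Arguments. Unset Strict Implicit. Unset Printing Implicit Defensive.
Import Order.TTheory GRing.Theory Num.Theory.
Local Open Scope ring_scope.

Definition midx (m : nat) (n : 'I_m -> nat) := forall j : 'I_m, 'I_(n j).

Definition vfam (K : Type) (m : nat) (n : 'I_m -> nat) :=
  forall j : 'I_m, 'I_(n j) -> K.

(* A tensor in K^{n_1 x ... x n_m x n_1 x ... x n_m}, indexed by (i, i'). *)
Definition htensor (K : Type) (m : nat) (n : 'I_m -> nat) :=
  midx n -> midx n -> K.

Definition hrank1C (R : rcfType) (m : nat) (n : 'I_m -> nat)
  (u : vfam R[i] n) : htensor R[i] n :=
  fun i i' => (\prod_(j < m) u j (i j)) * (\prod_(j < m) conjc (u j (i' j))).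

(* [u^1,...,u^m]_{(x)h} for real vectors (conjugation is the identity). *)
Definition hrank1R (R : rcfType) (m : nat) (n : 'I_m -> nat)
  (u : vfam R n) : htensor R n :=
  fun i i' => (\prod_(j < m) u j (i j)) * (\prod_(j < m) u j (i' j)).

Definition in_RD (R : rcfType) (m : nat) (n : 'I_m -> nat) (H : htensor R n) :=
  exists (r : nat) (lam : 'I_r -> R) (u : 'I_r -> vfam R n),
    forall i i', H i i' = \sum_(k < r) lam k * hrank1R (u k) i i'.

Definition R_separable (R : rcfType) (m : nat) (n : 'I_m -> nat) (H : htensor R n) :=
  exists (r : nat) (u : 'I_r -> vfam R n),
    forall i i', H i i' = \sum_(k < r) hrank1R (u k) i i'.

Definition C_separable (R : rcfType) (m : nat) (n : 'I_m -> nat) (H : htensor R n) :=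
  exists (r : nat) (u : 'I_r -> vfam R[i] n),
    forall i i', real_complex R (H i i') = \sum_(k < r) hrank1C (u k) i i'.

From HB Require Import structures.
From mathcomp Require Import all_boot all_order all_algebra.
From mathcomp Require Import reals complex ring.
Set Implicit Arguments. Unset Strict Implicit. Unset Printing Implicit Defensive.
Import Order.TTheory GRing.Theory Num.Theory.
Local Open Scope ring_scope.
Local Open Scope complex_scope.

(* A tensor of R_D is invariant under exchanging i_j and i'_j for any set S of
   modes j.  Averaging a complex decomposition H = \sum_k [u_k]_{(x)h} over the
   2^m exchanges replaces each factor u_{i_j} conj(u_{i'_j}) by its real part
   Re u_{i_j} Re u_{i'_j} + Im u_{i_j} Im u_{i'_j}; expanding the product of
   these sums writes H as a sum of real terms [v]_{(x)h}, where each v^j is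
   Re u^j or Im u^j. *)

Lemma mulC_conj_addC (R : rcfType) (z w : R[i]) :
  z * w^* + w * z^* = (2 * (complex.Re z * complex.Re w + complex.Im z * complex.Im w))%:C.
Proof.
case: z w => a b [c d]; apply/eqP; rewrite eq_complex /=.
by apply/andP; split; apply/eqP; ring.
Qed.

Lemma bigA_distr_bool (K : comPzSemiRingType) (I : finType) (F : I -> bool -> K) :
  \prod_i (F i false + F i true) = \sum_(c : {ffun I -> bool}) \prod_i F i (c i).
Proof.
rewrite -bigA_distr_bigA; apply: eq_bigr => i _.
by rewrite big_bool addrC.
Qed.

Section HermitianTensors.
Variables (R : rcfType) (m : nat) (n : 'I_m -> nat).

Lemma hrank1C_real (u : vfam R n) (i i' : midx n) :
  hrank1C (fun j x => (u j x)%:C) i i' = (hrank1R u i i')%:C.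
Proof.
rewrite /hrank1R /hrank1C rmorphM !rmorph_prod; congr (_ * _).
by apply: eq_bigr => j _; rewrite conjc_real.
Qed.

Lemma R_separable_C_separable (H : htensor R n) : R_separable H -> C_separable H.
Proof.
case=> r [u Hu]; exists r, (fun k j x => (u k j x)%:C) => i i'.
by rewrite Hu rmorph_sum; apply: eq_bigr => k _; rewrite hrank1C_real.
Qed.

Lemma R_separable_sum_finType (T : finType) (v : T -> vfam R n) (H : htensor R n) :
  (forall i i', H i i' = \sum_(t : T) hrank1R (v t) i i') -> R_separable H.
Proof.
move=> Hv; exists #|T|, (fun k => v (enum_val k)) => i i'.
by rewrite Hv (big_enum_val (A := T)).
Qed.

Definition midx_mix (S : {ffun 'I_m -> bool}) (i i' : midx n) : midx n :=
  fun j => if S j then i' j else i j.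

Lemma hrank1R_mix (u : vfam R n) S (i i' : midx n) :
  hrank1R u (midx_mix S i i') (midx_mix S i' i) = hrank1R u i i'.
Proof.
rewrite /hrank1R -!big_split; apply: eq_bigr => j _ /=.
by rewrite /midx_mix; case: (S j); rewrite // mulrC.
Qed.

Lemma in_RD_mix (H : htensor R n) S (i i' : midx n) :
  in_RD H -> H (midx_mix S i i') (midx_mix S i' i) = H i i'.
Proof.
case=> r [lam [u Hu]]; rewrite !Hu; apply: eq_bigr => k _.
by rewrite hrank1R_mix.
Qed.

Definition reim_part (u : vfam R[i] n) (c : {ffun 'I_m -> bool}) : vfam R n :=
  fun j x => if c j then complex.Im (u j x) else complex.Re (u j x).

Lemma sum_hrank1R_reim_part (u : vfam R[i] n) (i i' : midx n) :
  \sum_c hrank1R (reim_part u c) i i' =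
  \prod_(j < m) (complex.Re (u j (i j)) * complex.Re (u j (i' j))
                 + complex.Im (u j (i j)) * complex.Im (u j (i' j))).
Proof.
symmetry; rewrite (bigA_distr_bool (fun j (b : bool) =>
  if b then complex.Im (u j (i j)) * complex.Im (u j (i' j))
  else complex.Re (u j (i j)) * complex.Re (u j (i' j)))).
apply: eq_bigr => c _.
rewrite /hrank1R -big_split; apply: eq_bigr => j _ /=.
by rewrite /reim_part; case: (c j).
Qed.

Lemma sum_hrank1C_mix (u : vfam R[i] n) (i i' : midx n) :
  \sum_S hrank1C u (midx_mix S i i') (midx_mix S i' i) =
  (2 ^+ m * \sum_c hrank1R (reim_part u c) i i')%:C.
Proof.
transitivity (\prod_(j < m) (u j (i j) * (u j (i' j))^* + u j (i' j) * (u j (i j))^*)).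
  rewrite (bigA_distr_bool (fun j (b : bool) =>
    if b then u j (i' j) * (u j (i j))^* else u j (i j) * (u j (i' j))^*)).
  apply: eq_bigr => S _.
  rewrite /hrank1C -big_split; apply: eq_bigr => j _ /=.
  by rewrite /midx_mix; case: (S j).
rewrite sum_hrank1R_reim_part -[in 2 ^+ m](card_ord m) -prodr_const -big_split.
rewrite rmorph_prod; apply: eq_bigr => j _ /=.
by rewrite mulC_conj_addC.
Qed.

Lemma C_separable_R_separable (H : htensor R n) :
  in_RD H -> C_separable H -> R_separable H.
Proof.
move=> HD [r [u Hu]].
apply: (@R_separable_sum_finType _ (fun t : 'I_r * _ => reim_part (u t.1) t.2)).
move=> i i'; rewrite -(pair_bigA _ (fun k c => hrank1R (reim_part (u k) c) i i')) /=.
have two_m_neq0 : 2 ^+ m != 0 :> R by rewrite expf_eq0 pnatr_eq0 andbF.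
apply: (mulfI two_m_neq0); apply: complexI.
have average : (2 ^+ m * H i i')%:C =
    \sum_(S : {ffun 'I_m -> bool}) (H (midx_mix S i i') (midx_mix S i' i))%:C.
  under eq_bigr do rewrite in_RD_mix //.
  rewrite sumr_const -raddfMn card_ffun card_bool card_ord.
  by rewrite -[in RHS]mulr_natl natrX.
rewrite average (eq_bigr _ (fun S _ => Hu _ _)) exchange_big /=.
rewrite mulr_sumr rmorph_sum; apply: eq_bigr => k _.
exact: sum_hrank1C_mix.
Qed.

End HermitianTensors.

Theorem lemma6p2 (R : realType) (m : nat) (n : 'I_m -> nat) (H : htensor R n) :
  in_RD H -> (R_separable H <-> C_separable H).
Proof.
move=> HD; split; [exact: R_separable_C_separable | exact: C_separable_R_separable].
Qed.
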